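(* Let $n\ge 2$, let $\mathcal{S}\subseteq(\mathbb{C}^d)^{\otimes n}$ be the permutation-symmetric subspace, let $|\psi\rangle\in\mathcal{S}$ and let $X$ be a $d\times d$ complex matrix with $X_{(1)}|\psi\rangle\in\mathcal{S}$. Then for every function $f$ analytic on an open set containing the eigenvalues of $X$, $f(X)_{(1)}|\psi\rangle\in\mathcal{S}$.
   Context: $\mathcal{S}$ is the set of vectors in $(\mathbb{C}^d)^{\otimes n}$ invariant under all permutations of the $n$ tensor factors. For a $d\times d$ matrix $Y$, $Y_{(1)}$ denotes $Y\otimes\mathbb{I}\otimes\cdots\otimes\mathbb{I}$ on $(\mathbb{C}^d)^{\otimes n}$. $f(X)$ is the standard matrix function of $X$ (determined by the values of $f$ and its derivatives at the eigenvalues of $X$, up to the size of the corresponding largest Jordan blocks). *)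

From HB Require Import structures.
From mathcomp Require Import all_boot all_order all_algebra all_fingroup.
From mathcomp Require Import all_classical all_reals all_analysis.
From mathcomp.real_closed Require Import complex.

Set Implicit Arguments.
Unset Strict Implicit.
Unset Printing Implicit Defensive.

Import Order.TTheory GRing.Theory Num.Theory.
Import numFieldNormedType.Exports.
Local Open Scope classical_set_scope.
Local Open Scope ring_scope.

Section Defs.
Variable R : realType.
Local Notation C := (R[i] : numFieldType).

(* Vectors of (C^d)^{\otimes n}: coefficient functions on the computational
   basis |w_1 ... w_n>, indexed by words w : 'I_n -> 'I_d. *)
Definition tvec (d n : nat) := {ffun 'I_n -> 'I_d} -> C.

Definition sym_subspace (d n : nat) : set (tvec d n) :=
  [set psi | forall (s : {perm 'I_n}) (w : {ffun 'I_n -> 'I_d}),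
             psi [ffun k => w (s k)] = psi w].

(* Y acting on tensor factor i0, identity on the others:
   (Y_(i0) psi)(w) = \sum_j Y_{w(i0), j} psi(w[i0 := j]). *)
Definition act_factor (d n : nat) (i0 : 'I_n) (Y : 'M[C]_d) (psi : tvec d n)
  : tvec d n :=
  fun w => \sum_(j < d) Y (w i0) j * psi [ffun k => if k == i0 then j else w k].

Definition first_factor (n : nat) (hn : (2 <= n)%N) : 'I_n := Ordinal (ltnW hn).

(* Y_(1) := Y (x) I (x) ... (x) I *)
Definition act_first (d n : nat) (hn : (2 <= n)%N) (Y : 'M[C]_d) (psi : tvec d n) :=
  act_factor (first_factor hn) Y psi.

Definition analytic_at (f : C -> C) (z0 : C) : Prop :=
  exists (r : C) (a : nat -> C), 0 < r /\
    forall z : C, `|z - z0| < r ->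
      (fun N : nat => \sum_(k < N) a k * (z - z0) ^+ k) @ \oo --> f z.

Definition analytic_on (U : set C) (f : C -> C) : Prop :=
  open U /\ forall z, U z -> analytic_at f z.

Definition cderiv (k : nat) (f : C -> C) : C -> C := @derive1n C C^o k f.

(* Hermite interpolation conditions defining the standard matrix function:
   p^{(k)}(lam) = f^{(k)}(lam) for every eigenvalue lam and every
   k < (multiplicity of lam in the minimal polynomial of X)
     = (size of the largest Jordan block of X for lam). *)
Definition hermite_interp (d : nat) (X : 'M[C]_d.+1) (f : C -> C) (p : {poly C}) :=
  forall (lam : C) (k : nat), (k < mup lam (mxminpoly X))%N ->
    (derivn k p).[lam] = cderiv k f lam.

(* The standard matrix function f(X) := p(X), p any Hermite interpolant. *)
Definition mxfun_pos (d : nat) (f : C -> C) (X : 'M[C]_d.+1) : 'M[C]_d.+1 :=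
  horner_mx X (xget 0 [set p | hermite_interp X f p]).

Definition mxfun (d : nat) : (C -> C) -> 'M[C]_d -> 'M[C]_d :=
  match d with
  | 0 => fun _ X => X
  | d'.+1 => fun f X => mxfun_pos f X
  end.

End Defs.

From HB Require Import structures.
From mathcomp Require Import all_boot all_order all_algebra all_fingroup.
From mathcomp Require Import all_classical all_reals all_analysis.
From mathcomp.real_closed Require Import complex.
Import Order.TTheory GRing.Theory Num.Theory.
Import numFieldNormedType.Exports.
Local Open Scope classical_set_scope.
Local Open Scope ring_scope.

(* For symmetric psi, X_(1) psi is symmetric iff X_(k) psi = X_(1) psi for
   every factor k (permutations conjugate X_(1) into X_(k)).  This property
   passes from X to every polynomial in X, since operators acting on distinct
   factors commute; and the standard matrix function f(X) is by definition a
   polynomial in X (a Hermite interpolant of f on the spectrum). *)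

Section ActFactor.
Variable R : realType.
Local Notation C := (R[i] : numFieldType).
Variables d n : nat.
Implicit Types (psi : tvec R d n) (Y Z : 'M[C]_d) (i k : 'I_n).

Lemma act_factor0 i psi : act_factor i 0 psi = (fun=> 0).
Proof.
by apply: funext => w; rewrite /act_factor big1 // => j _; rewrite mxE mul0r.
Qed.

Lemma act_factorD i Y Z psi w :
  act_factor i (Y + Z) psi w = act_factor i Y psi w + act_factor i Z psi w.
Proof.
by rewrite /act_factor -big_split; apply: eq_bigr => j _; rewrite mxE mulrDl.
Qed.

Lemma act_factor_scalar i (c : C) psi w : act_factor i c%:M psi w = c * psi w.
Proof.
rewrite /act_factor (bigD1 (w i)) //= big1 ?addr0.
  rewrite mxE eqxx mulr1n; congr (_ * psi _).
  by apply/ffunP => k; rewrite ffunE; case: eqP => // ->.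
by move=> j /negPf hj; rewrite mxE eq_sym hj mulr0n mul0r.
Qed.

Lemma act_factorM i Y Z psi :
  act_factor i (Y * Z) psi = act_factor i Y (act_factor i Z psi).
Proof.
apply: funext => w; rewrite /act_factor.
under eq_bigr => j _ do rewrite mxE big_distrl /=.
rewrite exchange_big /=; apply: eq_bigr => l _.
rewrite big_distrr /=; apply: eq_bigr => j _.
rewrite ffunE eqxx mulrA; congr (_ * psi _).
by apply/ffunP => k; rewrite !ffunE; case: eqP.
Qed.

Lemma act_factorC i k Y Z psi : i != k ->
  act_factor i Y (act_factor k Z psi) = act_factor k Z (act_factor i Y psi).
Proof.
move=> neq_ik; apply: funext => w; rewrite /act_factor.
under eq_bigr => j _ do rewrite big_distrr /=.
rewrite exchange_big /=; apply: eq_bigr => l _.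
rewrite big_distrr /=; apply: eq_bigr => j _.
rewrite !ffunE (negPf neq_ik) eq_sym (negPf neq_ik) mulrCA.
congr (_ * (_ * psi _)); apply/ffunP => m; rewrite !ffunE.
have [->|_] := eqVneq m k; first by rewrite eq_sym (negPf neq_ik).
by case: eqP.
Qed.

Definition permute_tvec (s : {perm 'I_n}) psi : tvec R d n :=
  fun w => psi [ffun k => w (s k)].

Lemma sym_subspaceP psi :
  sym_subspace psi <-> forall s, permute_tvec s psi = psi.
Proof.
split=> [Spsi s|Fpsi s w]; first by apply: funext => w; exact: Spsi.
exact: (congr1 (fun g => g w) (Fpsi s)).
Qed.

Lemma permute_act_factor s i Y psi :
  permute_tvec s (act_factor i Y psi) = act_factor (s i) Y (permute_tvec s psi).
Proof.
apply: funext => w; rewrite /permute_tvec /act_factor; apply: eq_bigr => j _.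
rewrite ffunE; congr (_ * psi _); apply/ffunP => k; rewrite !ffunE.
by rewrite (inj_eq perm_inj).
Qed.

Lemma sym_act_factor_eq i k Y psi :
  sym_subspace psi -> sym_subspace (act_factor i Y psi) ->
  act_factor k Y psi = act_factor i Y psi.
Proof.
move=> /sym_subspaceP Spsi /sym_subspaceP SYpsi.
have := permute_act_factor (tperm i k) i Y psi.
by rewrite (SYpsi (tperm i k)) (Spsi (tperm i k)) tpermL.
Qed.

Lemma sym_act_factor i Y psi : sym_subspace psi ->
  (forall k, act_factor k Y psi = act_factor i Y psi) ->
  sym_subspace (act_factor i Y psi).
Proof.
move=> /sym_subspaceP Spsi eqY; apply/sym_subspaceP => s.
by rewrite permute_act_factor Spsi eqY.
Qed.

End ActFactor.

Lemma act_factor_horner_mx (R : realType) (d n : nat) (i : 'I_n)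
    (X : 'M[(R[i] : numFieldType)]_d.+1) (psi : tvec R d.+1 n) :
  (forall k, act_factor k X psi = act_factor i X psi) ->
  forall p k, act_factor k (horner_mx X p) psi = act_factor i (horner_mx X p) psi.
Proof.
move=> eqX; elim/poly_ind => [|q c IHq] k; first by rewrite rmorph0 !act_factor0.
rewrite rmorphD rmorphM /= horner_mx_X horner_mx_C.
apply: funext => w; rewrite !act_factorD !act_factor_scalar; congr (_ + _).
rewrite !act_factorM eqX; have [->//|neq_ki] := eqVneq k i.
have commX : horner_mx X q * X = X * horner_mx X q.
  by have := comm_mx_horner q (comm_mx_refl X); rewrite /comm_mx -!mulmxE.
by rewrite act_factorC // IHq -!act_factorM commX.
Qed.

Theorem corollary2 (R : realType) (d n : nat) (hn : (2 <= n)%N)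
  (psi : tvec R d n) (X : 'M[(R[i] : numFieldType)]_d) :
  @sym_subspace R d n psi ->
  @sym_subspace R d n (act_first hn X psi) ->
  forall f : (R[i] : numFieldType) -> (R[i] : numFieldType),
    (exists U : set (R[i] : numFieldType),
        (forall lam, eigenvalue X lam -> U lam) /\ analytic_on U f) ->
    @sym_subspace R d n (act_first hn (mxfun f X) psi).
Proof.
move=> Spsi SXpsi f _; rewrite /act_first in SXpsi *.
case: d X psi Spsi SXpsi => [|d] X psi Spsi SXpsi //=.
apply: sym_act_factor => // k; apply: act_factor_horner_mx => {}k.
exact: sym_act_factor_eq.
Qed.
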